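(* For real $c$, $x\ge 0$ and $y\ge 1$, let $\Phi_y(x)=(y+1)\,y^c+x^c-(y+1)\,x$. Then: (a) if $1<c<\frac{1+\sqrt5}{2}$, there exist $x\ge 2$ and $y$ with $1\le y\le x$ such that $\Phi_y(x)<0$; (b) if $c=\frac{1+\sqrt5}{2}$, then $\Phi_y(x)\ge 0$ for all $x\ge 0$ and all $y\ge 1$. *)

From Stdlib Require Import Reals.
Open Scope R_scope.

(* Real power x^c for x >= 0, with the convention 0^c = 0 (appropriate
   for c > 0, the only case used). Stdlib's Rpower is exp (c * ln x),
   which would give 0^c = 1, so we special-case 0. *)
Definition rpow (x c : R) : R := if Req_EM_T x 0 then 0 else Rpower x c.

Definition Phi (c y x : R) : R := (y + 1) * rpow y c + rpow x c - (y + 1) * x.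

(* Golden case: with c^2 = c + 1 the exponents 1/c and 1 - 1/c = 1/c^2 are
   conjugate, and weighted AM-GM (convexity of exp) applied to
   c x^c/(y+1) and c^2 y^c gives x <= x^c/(y+1) + y^c, the loss in the
   constant being absorbed because (y+1)/y <= 2 <= c^2.
   Below the golden ratio, c (c - 1) < 1, so some k satisfies c < k and
   k (c - 1) < 1. For y large and x = y^k, both (y+1) y^c ~ y^(1+c) and
   x^c = y^(kc) are negligible against (y+1) x ~ y^(1+k). *)

From Stdlib Require Import Reals Lra Psatz.
Open Scope R_scope.

Lemma rpow_Rpower (x c : R) : 0 < x -> rpow x c = Rpower x c.
Proof. intros Hx; unfold rpow; destruct (Req_EM_T x 0); [lra | reflexivity]. Qed.

Lemma Rpower_gt0 (x c : R) : 0 < Rpower x c.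
Proof. apply exp_pos. Qed.

Lemma ln_le (a b : R) : 0 < a -> a <= b -> ln a <= ln b.
Proof.
  intros Ha [Hab | <-]; [left; apply ln_increasing; lra | lra].
Qed.

Lemma exp_convex (l u v : R) : 0 <= l <= 1 ->
  exp (l * u + (1 - l) * v) <= l * exp u + (1 - l) * exp v.
Proof.
  intros Hl; set (m := l * u + (1 - l) * v).
  assert (tangent : forall w, exp m * (1 + (w - m)) <= exp w).
  { intros w; replace (exp w) with (exp m * exp (w - m))
      by (rewrite <- exp_plus; f_equal; ring).
    apply Rmult_le_compat_l; [left; apply exp_pos | apply exp_ineq1_le]. }
  pose proof (tangent u); pose proof (tangent v).
  assert (l * (exp m * (1 + (u - m))) + (1 - l) * (exp m * (1 + (v - m))) = exp m)
    by (unfold m; ring).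
  nra.
Qed.

Lemma lt_golden_sq (c : R) : 0 < c < (1 + sqrt 5) / 2 -> c * c < c + 1.
Proof.
  intros Hc; assert (sqrt 5 * sqrt 5 = 5) by (apply sqrt_sqrt; lra).
  pose proof (sqrt_pos 5).
  assert (1 < sqrt 5) by nra.
  assert (c * c - c - 1 = (c - (1 + sqrt 5) / 2) * (c - (1 - sqrt 5) / 2)) by nra.
  nra.
Qed.

Lemma golden_sq : (1 + sqrt 5) / 2 * ((1 + sqrt 5) / 2) = (1 + sqrt 5) / 2 + 1.
Proof. assert (sqrt 5 * sqrt 5 = 5) by (apply sqrt_sqrt; lra); nra. Qed.

Lemma golden_gt1 : 1 < (1 + sqrt 5) / 2.
Proof.
  assert (sqrt 5 * sqrt 5 = 5) by (apply sqrt_sqrt; lra).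
  pose proof (sqrt_pos 5); nra.
Qed.

Section GoldenExponent.

Variable c : R.
Hypothesis c_sq : c * c = c + 1.
Hypothesis c_gt1 : 1 < c.

Lemma golden_ln_succ_le (y : R) : 1 <= y -> c * ln (y + 1) <= (c + 2) * ln c + c * ln y.
Proof.
  intros Hy.
  assert (ln_c_ge0 : 0 <= ln c) by (rewrite <- ln_1; apply ln_le; lra).
  assert (ln_succ : ln (y + 1) <= ln 2 + ln y)
    by (rewrite <- ln_mult by lra; apply ln_le; lra).
  assert (ln2_le : ln 2 <= 2 * ln c)
    by (replace (2 * ln c) with (ln (c * c)) by (rewrite ln_mult; lra);
        apply ln_le; lra).
  assert (c <= 2) by nra.
  nra.
Qed.

Lemma golden_amgm (x y : R) : 0 < x -> 1 <= y ->
  x <= Rpower x c / (y + 1) + Rpower y c.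
Proof.
  intros Hx Hy.
  set (u := ln c + c * ln x - ln (y + 1)); set (v := 2 * ln c + c * ln y).
  assert (weight : 1 - / c = / (c * c)).
  { apply Rmult_eq_reg_l with (c * c); [| nra].
    rewrite Rinv_r by nra.
    replace (c * c * (1 - / c)) with (c * c - c) by (field; lra); lra. }
  assert (exp_u : / c * exp u = Rpower x c / (y + 1)).
  { unfold u, Rminus, Rpower; rewrite !exp_plus, exp_Ropp, !exp_ln by lra.
    field; lra. }
  assert (exp_v : (1 - / c) * exp v = Rpower y c).
  { unfold v, Rpower; replace (2 * ln c) with (ln c + ln c) by ring.
    rewrite weight, !exp_plus, exp_ln by lra; field; lra. }
  assert (ln_x_le : ln x <= / c * u + (1 - / c) * v).
  { pose proof (golden_ln_succ_le y Hy).
    apply Rmult_le_reg_l with (c * c); [nra |].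
    replace (c * c * (/ c * u + (1 - / c) * v)) with (c * u + v)
      by (rewrite weight; field; lra).
    unfold u, v; nra. }
  rewrite <- exp_u, <- exp_v, <- (exp_ln x) at 1 by lra.
  apply Rle_trans with (exp (/ c * u + (1 - / c) * v)).
  - destruct ln_x_le as [Hlt | ->]; [left; apply exp_increasing | right]; lra.
  - apply exp_convex; split; [left; apply Rinv_0_lt_compat; lra |].
    rewrite <- Rinv_1; apply Rinv_le_contravar; lra.
Qed.

Lemma Phi_golden_ge0 (x y : R) : 0 <= x -> 1 <= y -> 0 <= Phi c y x.
Proof.
  intros [Hx | <-] Hy; unfold Phi;
    rewrite (rpow_Rpower y) by lra; pose proof (Rpower_gt0 y c).
  - rewrite rpow_Rpower by lra.
    pose proof (golden_amgm x y Hx Hy).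
    assert ((y + 1) * (Rpower x c / (y + 1)) = Rpower x c) by (field; lra).
    nra.
  - unfold rpow; destruct (Req_EM_T 0 0); [nra | lra].
Qed.

End GoldenExponent.

Lemma Phi_pow_lt0 (c k y : R) : 1 <= y ->
  4 < Rpower y (k - c) -> 4 < Rpower y (1 + k - k * c) -> Phi c y (Rpower y k) < 0.
Proof.
  intros Hy Hkc Hkkc; set (x := Rpower y k).
  assert (Hx : 0 < x) by apply Rpower_gt0.
  unfold Phi; rewrite !rpow_Rpower by lra.
  assert (split_x : x = Rpower y c * Rpower y (k - c))
    by (unfold x; rewrite <- Rpower_plus; f_equal; ring).
  assert (split_yx : Rpower x c * Rpower y (1 + k - k * c) = y * x).
  { unfold x; rewrite Rpower_mult, <- Rpower_plus.
    replace (k * c + (1 + k - k * c)) with (1 + k) by ring.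
    rewrite Rpower_plus, Rpower_1 by lra; reflexivity. }
  pose proof (Rpower_gt0 y c); pose proof (Rpower_gt0 x c).
  assert (4 * Rpower y c < x) by nra.
  assert (4 * Rpower x c < y * x) by nra.
  nra.
Qed.

Lemma Rpower_large (a1 a2 M : R) : 0 < a1 -> 0 < a2 -> 1 < M ->
  exists y, M < y /\ M < Rpower y a1 /\ M < Rpower y a2.
Proof.
  intros Ha1 Ha2 HM; set (s := 1 + / a1 + / a2).
  assert (0 < / a1) by (apply Rinv_0_lt_compat; lra).
  assert (0 < / a2) by (apply Rinv_0_lt_compat; lra).
  assert (exceeds : forall a, 1 < a -> M < Rpower M a)
    by (intros a Ha; rewrite <- (Rpower_1 M) at 1 by lra; apply Rpower_lt; lra).
  exists (Rpower M s); rewrite !Rpower_mult; repeat split; apply exceeds.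
  - unfold s; lra.
  - assert (a1 * / a1 = 1) by (field; lra); unfold s; nra.
  - assert (a2 * / a2 = 1) by (field; lra); unfold s; nra.
Qed.

Theorem mainTheorem2 :
  (forall c : R, 1 < c < (1 + sqrt 5) / 2 ->
     exists x y : R, 2 <= x /\ 1 <= y /\ y <= x /\ Phi c y x < 0) /\
  (forall x y : R, 0 <= x -> 1 <= y -> 0 <= Phi ((1 + sqrt 5) / 2) y x).
Proof.
  split.
  - intros c Hc.
    assert (c * c < c + 1) by (apply lt_golden_sq; lra).
    set (k := (c + / (c - 1)) / 2).
    assert (c < / (c - 1))
      by (apply Rmult_lt_reg_l with (c - 1); [lra | rewrite Rinv_r; nra]).
    assert (c < k) by (unfold k; lra).
    assert (k * (c - 1) < 1)
      by (replace (k * (c - 1)) with ((c * (c - 1) + 1) / 2)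
            by (unfold k; field; lra); lra).
    destruct (Rpower_large (k - c) (1 + k - k * c) 4) as [y [Hy4 [Hkc Hkkc]]];
      [lra | nra | lra |].
    assert (y_le_x : y <= Rpower y k)
      by (rewrite <- (Rpower_1 y) at 1 by lra; apply Rle_Rpower; lra).
    exists (Rpower y k), y; repeat split; try lra.
    apply Phi_pow_lt0; lra.
  - apply Phi_golden_ge0; [apply golden_sq | apply golden_gt1].
Qed.
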